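(* Consider the lifted multi-agent system described in the context, run with the dynamic edge weights of Algorithm 1 (MWN-PPAC). Then the system achieves asymptotic average consensus: $$\lim_{k\to\infty}\boldsymbol{x}(k)=\mathds{1}_n\otimes \mathrm{Avg}(\boldsymbol{x}(0)),\qquad \mathrm{Avg}(\boldsymbol{x}(0))=\frac1n\sum_{i=1}^n \boldsymbol{x}_i(0)\in\mathbb{R}^{D}.$$
   Context: Setting: $n>1$ agents, communication graph $\mathcal{G}=(\mathcal{V},\mathcal{E})$ with $\mathcal{V}=\{1,\dots,n\}$, undirected and connected; $\mathcal{N}_i=\{j:(i,j)\in\mathcal{E}\}$. Each agent originally has a real state in $\mathbb{R}^d$ and lifts it by prepending a virtual state in $\mathbb{R}^{d'}$ ($d'\ge 3$), giving $\boldsymbol{x}_i(k)\in\mathbb{R}^{D}$, $D=d+d'$ (first $d'$ coordinates virtual, last $d$ coordinates real). Update rule, with fixed $\sigma>0$: $$\boldsymbol{x}_i(k+1)=\boldsymbol{x}_i(k)+\sigma\sum_{j\in\mathcal{N}_i}A_{ij}(k)\big(\boldsymbol{x}_j(k)-\boldsymbol{x}_i(k)\big),\quad k\in\mathbb{N},$$ and $\boldsymbol{x}(k)=(\boldsymbol{x}_1(k)^\top,\dots,\boldsymbol{x}_n(k)^\top)^\top$. Auxiliary vectors: $\boldsymbol{v}_1,\dots,\boldsymbol{v}_D\in\mathbb{R}^D$ nonzero and mutually orthogonal, each with at least 2 nonzero entries, $\boldsymbol{v}_1$ having fewer than $d'$ nonzero entries, and all entries of $\boldsymbol{v}_D$ nonzero.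 Let $P_{\boldsymbol v}=\boldsymbol v\boldsymbol v^\top/(\boldsymbol v^\top\boldsymbol v)$. Edge weights (Algorithm 1): at $k=0$, $A_{ij}(0)=A_{ji}(0)\in\mathbb{R}^{D\times D}$ for each edge; if one endpoint is legitimate and the other honest-but-curious, $A_{ij}(0)=\alpha_{ij}P_{\boldsymbol v_1}+\beta_{ij}P_{\boldsymbol v_D}$ with $\alpha_{ij},\beta_{ij}>0$, otherwise $A_{ij}(0)$ is arbitrary. For $k\ge1$ and $(i,j)\in\mathcal{E}$: $A_{ij}(k)=A_{ji}(k)=\gamma_{ij}^{\rho(k)}P_{\boldsymbol v_{\rho(k)}}+\zeta_{ij}^{\rho(k)}P_{\boldsymbol v_D}$, where $d^*=D-1$, $\rho(k)=k \bmod d^*$ if this is nonzero and $\rho(k)=d^*$ otherwise, and $0<\gamma_{ij}^{\rho(k)},\zeta_{ij}^{\rho(k)}<\frac{1}{4(n-1)\sigma}$ (with $\gamma_{ij}=\gamma_{ji}$, $\zeta_{ij}=\zeta_{ji}$). $A_{ij}(k)=0$ if $(i,j)\notin\mathcal{E}$. *)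

From HB Require Import structures.
From mathcomp Require Import all_boot all_order all_algebra.
From mathcomp Require Import all_classical all_reals all_analysis.
Set Implicit Arguments. Unset Strict Implicit. Unset Printing Implicit Defensive.
Import Order.TTheory GRing.Theory Num.Theory.
Local Open Scope ring_scope.

Definition projvec (R : realType) (D : nat) (v : 'cV[R]_D) : 'M[R]_D :=
  ((v^T *m v) 0 0)^-1 *: (v *m v^T).

Definition nnz (R : realType) (D : nat) (v : 'cV[R]_D) : nat :=
  #|[set c : 'I_D | v c 0 != 0]|.

Definition rho (dstar k : nat) : nat :=
  if (k %% dstar == 0)%N then dstar else (k %% dstar)%N.

Definition avg (R : realType) (n D : nat) (x0 : 'I_n -> 'cV[R]_D) : 'cV[R]_D :=
  (n%:R)^-1 *: \sum_(i < n) x0 i.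

From HB Require Import structures.
From mathcomp Require Import all_boot all_order all_algebra.
From mathcomp Require Import all_classical all_reals all_analysis.
From mathcomp Require Import ring lra zify.
Import Order.TTheory GRing.Theory Num.Theory.
Import numFieldNormedType.Exports.
Local Open Scope ring_scope.
Local Open Scope classical_set_scope.

Set Implicit Arguments.
Unset Strict Implicit.
Unset Printing Implicit Defensive.

(* Along each auxiliary direction the protocol decouples.  For k >= 1 the weight
   A_ij(k) combines the projections onto v_rho(k) and v_D, so the coordinate
   v_m^T x_i(k) follows a scalar Laplacian iteration whose weights are symmetric,
   at most 1/(2(n-1)), and bounded below on every edge once in each window of d*
   steps.  Such an iteration preserves the sum of the coordinates and, by a
   Poincare inequality on the connected graph, contracts their squared deviation
   from the mean by a fixed factor in every window, so each coordinate converges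
   to its average.  The symmetric initial weights keep the average of the states
   unchanged, and the v_m form an orthogonal basis of R^D. *)

Lemma ler_sum_term (R : numDomainType) (I : finType) (P : pred I) (F : I -> R) i :
  P i -> (forall j, P j -> 0 <= F j) -> F i <= \sum_(j | P j) F j.
Proof.
move=> Pi F0; rewrite (bigD1 i) //= lerDl.
by apply: sumr_ge0 => j /andP [Pj _]; exact: F0.
Qed.

Lemma sqr_sum_le (R : realFieldType) (I : finType) (P : pred I) (a : I -> R) :
  (\sum_(j | P j) a j) ^+ 2 <= #|P|%:R * \sum_(j | P j) a j ^+ 2.
Proof.
have sum_cst (c : R) : \sum_(k | P k) c = #|P|%:R * c by rewrite sumr_const mulr_natl.
set S := \sum_(j | P j) a j ^+ 2.
have -> : #|P|%:R * S = \sum_(j | P j) \sum_(k | P k) (a j ^+ 2 + a k ^+ 2) / 2.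
  have -> : \sum_(j | P j) \sum_(k | P k) (a j ^+ 2 + a k ^+ 2) / 2 =
            \sum_(j | P j) (#|P|%:R * a j ^+ 2 + S) / 2.
    by apply: eq_bigr => j _; rewrite -big_distrl /= big_split /= sum_cst.
  by rewrite -big_distrl /= big_split /= sum_cst -big_distrr /= -/S; field.
rewrite expr2 big_distrl /=; apply: ler_sum => j _.
rewrite big_distrr /=; apply: ler_sum => k _.
by have := sqr_ge0 (a j - a k); rewrite !expr2 => h; lra.
Qed.

Lemma sum_antisym_eq0 (K : numFieldType) (V : lmodType K) (I : finType)
    (f : I -> I -> V) :
  (forall i j, f i j = - f j i) -> \sum_i \sum_j f i j = 0.
Proof.
move=> f_anti; set T := \sum_i \sum_j f i j.
have TN : T = - T.
  rewrite {1}/T exchange_big /= -sumrN; apply: eq_bigr => i _.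
  by rewrite -sumrN; apply: eq_bigr => j _; exact: f_anti.
have : 2%:R *: T = 0 by rewrite scaler_nat mulr2n {1}TN addNr.
by move/eqP; rewrite scaler_eq0 pnatr_eq0 => /eqP.
Qed.

Lemma sum_sym_mul_diff (R : comPzRingType) (I : finType) (W : I -> I -> R) (e : I -> R) :
  (forall i j, W i j = W j i) ->
  2 * \sum_i \sum_j W i j * (e j - e i) * e i =
  - \sum_i \sum_j W i j * (e i - e j) ^+ 2.
Proof.
move=> W_sym; set T := \sum_i \sum_j W i j * (e j - e i) * e i.
have TE : T = \sum_i \sum_j W i j * (e i - e j) * e j.
  rewrite /T exchange_big /=; apply: eq_bigr => i _; apply: eq_bigr => j _.
  by rewrite W_sym.
rewrite mulr2n mulrDl mul1r {2}TE /T -big_split -sumrN /=.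
apply: eq_bigr => i _; rewrite -big_split -sumrN /=; apply: eq_bigr => j _.
ring.
Qed.

Lemma finite_pos_lower_bound (R : realDomainType) (T : finType) (P : pred T)
    (f : T -> R) :
  (forall t, P t -> 0 < f t) -> exists2 delta, 0 < delta & forall t, P t -> delta <= f t.
Proof.
move=> f_gt0; exists (\big[Num.min/1]_(t | P t) f t).
  by apply: (big_ind (fun y => 0 < y)) => // a b a0 b0; rewrite lt_min a0 b0.
by move=> t Pt; rewrite (bigD1 t) //= ge_min lexx.
Qed.

Section EdgeEnergy.
Variables (R : realFieldType) (T : finType) (adj : rel T).
Implicit Type f : T -> R.

Definition edge_energy f := \sum_i \sum_(j | adj i j) (f i - f j) ^+ 2.

Lemma edge_energy_ge0 f : 0 <= edge_energy f.
Proof. by apply: sumr_ge0 => i _; apply: sumr_ge0 => j _; exact: sqr_ge0. Qed.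

Lemma edge_sqr_le_energy f i j : adj i j -> (f i - f j) ^+ 2 <= edge_energy f.
Proof.
move=> ij; have sqr0 k l : 0 <= (f k - f l) ^+ 2 by exact: sqr_ge0.
apply: le_trans (ler_sum_term (P := xpredT) (i := i) _ _) => //.
  exact: (ler_sum_term (P := adj i)).
by move=> k _; exact: sumr_ge0.
Qed.

Lemma path_sqr_le_energy f x p :
  path adj x p -> (f x - f (last x p)) ^+ 2 <= (4 ^ size p)%:R * edge_energy f.
Proof.
elim: p x => [|y p IH] x /=; first by rewrite subrr expr0n mul1r edge_energy_ge0.
case/andP=> xy py; rewrite expnS natrM -mulrA.
have := edge_sqr_le_energy f xy; have := IH y py; have := edge_energy_ge0 f.
have : 1 <= (4 ^ size p)%:R :> R by rewrite ler1n expn_gt0.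
have -> : f x - f (last y p) = (f x - f y) + (f y - f (last y p)) by ring.
set a := f x - f y; set b := f y - f (last y p).
set K := (4 ^ size p)%:R; set S := edge_energy f => K1 S0 bS aS.
(* [(a + b)^2 <= 2 a^2 + 2 b^2 <= 2 S + 2 K S <= 4 K S] *)
have := sqr_ge0 (a - b); nra.
Qed.

Lemma connect_sqr_le_energy f i j :
  connect adj i j -> (f i - f j) ^+ 2 <= (4 ^ #|T|)%:R * edge_energy f.
Proof.
case/connectP=> p ip ->; case: (shortenP ip) => p' ip' uniq_p' _.
apply: le_trans (path_sqr_le_energy f ip') _.
apply: ler_wpM2r; first exact: edge_energy_ge0.
rewrite ler_nat leq_exp2l //; apply: ltnW.
by have := max_card (mem (i :: p')); rewrite (card_uniqP uniq_p').
Qed.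

End EdgeEnergy.

Section LaplacianStep.
Variables (R : realFieldType) (n : nat) (W : 'I_n -> 'I_n -> R).
Hypotheses (W_sym : forall j l, W j l = W l j) (W_ge0 : forall j l, 0 <= W j l)
  (W_small : forall j l, n.-1%:R * W j l <= 1 / 2).
Implicit Type e : 'I_n -> R.

Definition lap_step e j := e j + \sum_l W j l * (e l - e j).

Definition sum_sqr e := \sum_j e j ^+ 2.

Definition dirichlet_form e := \sum_j \sum_l W j l * (e j - e l) ^+ 2.

Lemma sum_sqr_ge0 e : 0 <= sum_sqr e.
Proof. by apply: sumr_ge0 => j _; exact: sqr_ge0. Qed.

Lemma dirichlet_form_ge0 e : 0 <= dirichlet_form e.
Proof.
by apply: sumr_ge0 => j _; apply: sumr_ge0 => l _; apply: mulr_ge0 => //; exact: sqr_ge0.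
Qed.

Lemma sum_lap_step e : \sum_j lap_step e j = \sum_j e j.
Proof.
rewrite big_split /= sum_antisym_eq0 ?addr0 // => j l.
by rewrite W_sym; ring.
Qed.

Lemma lap_step_subr e a j : lap_step (fun l => e l - a) j = lap_step e j - a.
Proof.
rewrite /lap_step; under eq_bigr do rewrite opprB addrA subrK.
ring.
Qed.

Lemma sqr_lap_increment_le e j :
  (\sum_l W j l * (e l - e j)) ^+ 2 <= (\sum_l W j l * (e j - e l) ^+ 2) / 2.
Proof.
rewrite (bigD1 j) //= subrr mulr0 add0r.
apply: le_trans (sqr_sum_le (predC1 j) _) _.
rewrite cardC1 card_ord [X in _ <= X / 2](bigD1 j) //= subrr expr0n /= mulr0 add0r.
rewrite big_distrr big_distrl /=; apply: ler_sum => l _.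
have := W_small j l; have := W_ge0 j l; have := sqr_ge0 (e j - e l).
rewrite -[e l - e j]opprB exprMn sqrrN.
set w := W j l; set t := (e j - e l) ^+ 2; set m := n.-1%:R => t0 w0 mw.
have : 0 <= (1 / 2 - m * w) * (w * t) by apply: mulr_ge0; [lra | exact: mulr_ge0].
rewrite expr2; lra.
Qed.

(* Expanding the square, the cross term is exactly [- dirichlet_form e] by symmetry
   of [W], and the squared increments cost at most half of it. *)
Lemma sum_sqr_lap_step e : sum_sqr (lap_step e) <= sum_sqr e - dirichlet_form e / 2.
Proof.
set g := fun j => \sum_l W j l * (e l - e j).
have -> : sum_sqr (lap_step e) =
    sum_sqr e + 2 * \sum_j \sum_l W j l * (e l - e j) * e j + \sum_j g j ^+ 2.
  rewrite /sum_sqr big_distrr /= -!big_split /=; apply: eq_bigr => j _.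
  by rewrite /lap_step -big_distrl /= -/(g j); ring.
rewrite sum_sym_mul_diff // -/(dirichlet_form e).
have : \sum_j g j ^+ 2 <= dirichlet_form e / 2.
  by rewrite /dirichlet_form big_distrl /=; apply: ler_sum => j _; exact: sqr_lap_increment_le.
lra.
Qed.

End LaplacianStep.

Section Contraction.
Variables (R : realFieldType) (n : nat) (adj : rel 'I_n) (W : 'I_n -> 'I_n -> R).
Hypothesis connected : forall i j, connect adj i j.
Implicit Type e : 'I_n -> R.

Lemma sum_sqr_le_edge_energy e :
  \sum_j e j = 0 -> sum_sqr e <= n%:R * (4 ^ n)%:R * edge_energy adj e.
Proof.
move=> sum_e0; set K := (4 ^ n)%:R : R; set S := edge_energy adj e.
have S0 : 0 <= S := edge_energy_ge0 adj e.
have sum_cst (x : R) : \sum_(l < n) x = n%:R * x by rewrite sumr_const card_ord mulr_natl.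
rewrite -mulrA -sum_cst; apply: ler_sum => j _.
have n0 : 0 < n%:R :> R by rewrite ltr0n (@leq_ltn_trans j).
(* [n e_j] is the sum of the differences [e_j - e_l], each controlled by the energy. *)
have sum_diff : \sum_l (e j - e l) = n%:R * e j.
  by rewrite sumrB sum_e0 subr0 sumr_const card_ord mulr_natl.
have := sqr_sum_le xpredT (fun l => e j - e l).
rewrite sum_diff cardT size_enum_ord => cs.
have : \sum_l (e j - e l) ^+ 2 <= n%:R * (K * S).
  rewrite -sum_cst; apply: ler_sum => l _.
  by have := connect_sqr_le_energy e (connected j l); rewrite card_ord.
move=> /(ler_wpM2l (ltW n0)) /(le_trans cs).
by rewrite exprMn expr2 -mulrA !ler_pM2l.
Qed.

Hypotheses (W_sym : forall j l, W j l = W l j) (W_ge0 : forall j l, 0 <= W j l)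
  (W_small : forall j l, n.-1%:R * W j l <= 1 / 2).

Lemma edge_energy_le_dirichlet e delta :
  (forall i j, adj i j -> delta <= W i j) ->
  delta * edge_energy adj e <= dirichlet_form W e.
Proof.
move=> W_edge; rewrite /edge_energy big_distrr /=; apply: ler_sum => i _.
rewrite big_distrr /= [X in _ <= X](bigID (adj i)) /= -[X in X <= _]addr0.
apply: lerD.
  by apply: ler_sum => j ij; apply: ler_wpM2r; [exact: sqr_ge0 | exact: W_edge].
by apply: sumr_ge0 => j _; apply: mulr_ge0 => //; exact: sqr_ge0.
Qed.

Lemma sum_sqr_lap_step_contract e delta :
  (0 < n)%N -> 0 <= delta -> (forall i j, adj i j -> delta <= W i j) ->
  \sum_j e j = 0 ->
  sum_sqr (lap_step W e) <= (1 - delta / (2 * n%:R * (4 ^ n)%:R)) * sum_sqr e.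
Proof.
move=> n0 delta0 W_edge sum_e0.
set nK := n%:R * (4 ^ n)%:R : R.
have nK0 : 0 < nK by rewrite mulr_gt0 // ltr0n // expn_gt0.
have poincare : delta * sum_sqr e <= nK * dirichlet_form W e.
  apply: le_trans (ler_wpM2l delta0 (sum_sqr_le_edge_energy sum_e0)) _.
  rewrite -/nK mulrCA; apply: ler_wpM2l; first exact: ltW.
  exact: edge_energy_le_dirichlet.
have : delta * sum_sqr e / (2 * nK) <= dirichlet_form W e / 2.
  rewrite ler_pdivrMr; last by rewrite mulr_gt0.
  by have -> : dirichlet_form W e / 2 * (2 * nK) = nK * dirichlet_form W e by field.
have := sum_sqr_lap_step W_sym W_ge0 W_small e.
rewrite mulrA -/nK mulrBl mul1r mulrAC; lra.
Qed.

End Contraction.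

Lemma cvg_windowed_contraction (R : realType) (V : nat -> R) (q : R) (N : nat) :
  0 <= q < 1 -> (forall k, 0 <= V k) -> (forall k, V k.+1 <= V k) ->
  (forall k, exists2 k', (k <= k' < k + N)%N & V k'.+1 <= q * V k') ->
  V @ \oo --> 0.
Proof.
case/andP=> q0 q1 V0 V_step contract.
have V_mono : {homo V : k l / (k <= l)%N >-> l <= k} by apply/nonincreasing_seqP.
have V_geo m k : (m * N <= k)%N -> V k <= q ^+ m * V 0%N.
  elim: m k => [|m IH] k mNk; first by rewrite expr0 mul1r V_mono.
  have [k' /andP [mNk' k'N] Vk'] := contract (m * N)%N.
  have k'k : (k'.+1 <= k)%N by apply: leq_trans mNk; rewrite mulSn addnC.
  apply: le_trans (V_mono _ _ k'k) _; apply: le_trans Vk' _.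
  by rewrite exprS -mulrA ler_wpM2l // IH.
apply/cvgr0Pnorm_lt => eps eps0.
have Veps0 : 0 < eps / (V 0%N + 1) by rewrite divr_gt0 // ltr_wpDl.
have q_norm : `|q| < 1 by rewrite ger0_norm.
have [M _ qM] := cvgr0_norm_lt _ (cvg_expr q_norm) _ Veps0.
exists (M * N)%N => // k /= Mk; rewrite ger0_norm //.
apply: le_lt_trans (V_geo _ _ Mk) _.
have := qM M (leqnn M); rewrite /= ger0_norm ?exprn_ge0 // => qMeps.
apply: le_lt_trans (ler_wpM2r (V0 _) (ltW qMeps)) _.
rewrite mulrAC ltr_pdivrMr ?ltr_wpDl // ltr_pM2l //.
by rewrite ltrDl.
Qed.

Lemma cvg0_sqr_le (R : realType) (T : Type) (F : set_system T) (FF : Filter F)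
    (u V : T -> R) :
  (forall t, u t ^+ 2 <= V t) -> V @ F --> 0 -> u @ F --> 0.
Proof.
move=> uV /cvgr0_norm_lt V0; apply/cvgr0Pnorm_lt => eps eps0.
apply: filterS (V0 _ (exprn_gt0 2 eps0)) => t Vt.
have : `|u t| ^+ 2 < eps ^+ 2.
  rewrite real_normK ?num_real //.
  exact: le_lt_trans (uV t) (le_lt_trans (ler_norm _) Vt).
by rewrite ltr_pXn2r ?nnegrE // ltW.
Qed.

Lemma lap_consensus (R : realType) (n : nat) (adj : rel 'I_n)
    (W : nat -> 'I_n -> 'I_n -> R) (y : nat -> 'I_n -> R) (delta : R) (N : nat) :
  (forall i j, connect adj i j) ->
  (forall k i j, W k i j = W k j i) -> (forall k i j, 0 <= W k i j) ->
  (forall k i j, n.-1%:R * W k i j <= 1 / 2) ->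
  0 < delta ->
  (forall k, exists2 k', (k <= k' < k + N)%N & forall i j, adj i j -> delta <= W k' i j) ->
  (forall k i, y k.+1 i = lap_step (W k) (y k) i) ->
  forall i, (fun k => y k i) @ \oo --> (n%:R)^-1 * \sum_j y 0%N j.
Proof.
move=> connected W_sym W_ge0 W_small delta0 W_active y_step i.
have n0 : (0 < n)%N by apply: leq_ltn_trans (ltn_ord i).
set a := (n%:R)^-1 * \sum_j y 0%N j.
pose e k j := y k j - a.
have sum_y k : \sum_j y k j = \sum_j y 0%N j.
  elim: k => // k <-; rewrite -(sum_lap_step (W_sym k) (y k)).
  by apply: eq_bigr => j _; exact: y_step.
have sum_e k : \sum_j e k j = 0.
  rewrite sumrB sum_y sumr_const card_ord /a -[(_ * _) *+ n]mulr_natl mulrA.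
  by rewrite mulfV ?mul1r ?subrr // pnatr_eq0 -lt0n.
have e_step k : sum_sqr (e k.+1) = sum_sqr (lap_step (W k) (e k)).
  by apply: eq_bigr => j _; rewrite lap_step_subr /e y_step.
pose c := Num.min (delta / (2 * n%:R * (4 ^ n)%:R)) 1.
have c0 : 0 < c by rewrite lt_min ltr01 andbT divr_gt0 // !mulr_gt0 // ltr0n // expn_gt0.
have V_cvg : (fun k => sum_sqr (e k)) @ \oo --> 0.
  apply: (@cvg_windowed_contraction _ _ (1 - c) N).
  - by rewrite subr_ge0 ge_min lexx orbT /= gtrDl oppr_lt0.
  - by move=> k; exact: sum_sqr_ge0.
  - move=> k /=; rewrite e_step.
    have := sum_sqr_lap_step (W_sym k) (W_ge0 k) (W_small k) (e k).
    by have := dirichlet_form_ge0 (W_ge0 k) (e k); lra.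
  - move=> k; have [k' k'_win W_edge] := W_active k; exists k' => //.
    rewrite /= e_step.
    apply: le_trans (sum_sqr_lap_step_contract connected (W_sym k') (W_ge0 k')
      (W_small k') n0 (ltW delta0) W_edge (sum_e k')) _.
    by apply: ler_wpM2r; [exact: sum_sqr_ge0 | rewrite lerD2l lerN2 ge_min lexx].
have e_cvg : (fun k => e k i) @ \oo --> 0.
  apply: cvg0_sqr_le V_cvg => k.
  by apply: (ler_sum_term (P := xpredT) (F := fun j => e k j ^+ 2)) => // j _; exact: sqr_ge0.
have -> : (fun k => y k i) = (fun k => e k i + a) by apply/funext => k; rewrite subrK.
by rewrite -[a in _ --> a]add0r; apply: cvgD => //; exact: cvg_cst.
Qed.

Lemma cV_sqnorm_gt0 (R : realFieldType) D (u : 'cV[R]_D) : u != 0 -> 0 < (u^T *m u) 0 0.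
Proof.
move=> u0; have -> : (u^T *m u) 0 0 = \sum_c u c 0 ^+ 2.
  by rewrite !mxE; apply: eq_bigr => c _; rewrite !mxE expr2.
rewrite lt_def sumr_ge0 ?andbT; last by move=> c _; exact: sqr_ge0.
apply: contra u0 => /eqP /psumr_eq0P sum0; apply/eqP/matrixP => c j.
by rewrite ord1 mxE; apply/eqP; rewrite -sqrf_eq0 sum0 // => l _; exact: sqr_ge0.
Qed.

Lemma trmx_mul_projvec (R : realType) D (u : 'cV[R]_D) : u != 0 -> u^T *m projvec u = u^T.
Proof.
move=> u0; rewrite /projvec -scalemxAr mulmxA [u^T *m u]mx11_scalar mul_scalar_mx.
by rewrite mxE mulr1n scalerA mulVf ?scale1r // gt_eqF // cV_sqnorm_gt0.
Qed.

Lemma trmx_mul_projvec_orth (R : realType) D (u w : 'cV[R]_D) :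
  u^T *m w = 0 -> u^T *m projvec w = 0.
Proof. by move=> uw; rewrite /projvec -scalemxAr mulmxA uw mul0mx scaler0. Qed.

Lemma orthogonal_expansion (R : realFieldType) D (w : 'I_D -> 'cV[R]_D) :
  (forall m, w m != 0) -> (forall m m', m != m' -> (w m)^T *m w m' = 0) ->
  forall z : 'cV[R]_D, z = \sum_m (((w m)^T *m z) 0 0 / ((w m)^T *m w m) 0 0) *: w m.
Proof.
move=> w0 w_orth z; set nrm := fun m => ((w m)^T *m w m) 0 0.
pose B := \matrix_(c, m) w m c 0 : 'M[R]_D.
pose Binv := diag_mx (\row_m (nrm m)^-1) *m B^T.
have BtB m m' : (B^T *m B) m m' = ((w m)^T *m w m') 0 0.
  by rewrite !mxE; apply: eq_bigr => c _; rewrite !mxE.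
(* The columns of [B] are orthogonal, so [Binv] is a left, hence right, inverse. *)
have BinvK : Binv *m B = 1%:M.
  apply/matrixP => m m'; rewrite -mulmxA mul_diag_mx mxE BtB.
  case: (eqVneq m m') => [<-|mm']; last by rewrite w_orth // !mxE mulr0 (negbTE mm').
  by rewrite -/(nrm m) !mxE eqxx mulVf // gt_eqF // cV_sqnorm_gt0.
have Btz m : (B^T *m z) m 0 = ((w m)^T *m z) 0 0.
  by rewrite !mxE; apply: eq_bigr => c _; rewrite !mxE.
rewrite {1}(_ : z = B *m (Binv *m z)); last by rewrite mulmxA (mulmx1C BinvK) mul1mx.
apply/matrixP => c j; rewrite ord1 summxE mxE; apply: eq_bigr => m _.
rewrite /Binv -mulmxA mul_diag_mx mxE mxE Btz [in LHS]mxE [in RHS]mxE -/(nrm m).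
by rewrite mulrC (mulrC (nrm m)^-1).
Qed.

Lemma rho_range ds k : (0 < ds)%N -> (1 <= rho ds k <= ds)%N.
Proof.
move=> ds0; rewrite /rho; case: ifP => [_|k_ds]; first by rewrite ds0 leqnn.
by rewrite lt0n k_ds ltnW // ltn_pmod.
Qed.

Lemma rho_window ds m t : (0 < ds)%N -> (1 <= m <= ds)%N ->
  exists2 t', (t <= t' < t + ds)%N & rho ds t' = m.
Proof.
move=> ds0 /andP [m1 m_ds]; set s := ((m + ds - t %% ds) %% ds)%N.
exists (t + s)%N; first by rewrite leq_addr ltn_add2l ltn_pmod.
have t_ds : (t %% ds < ds)%N by rewrite ltn_pmod.
have ts_mod : ((t + s) %% ds = m %% ds)%N.
  by rewrite /s modnDmr -modnDml addnBA ?addKn ?modnDr // ltnW // ltn_addl.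
rewrite /rho ts_mod; case: (ltngtP m ds) m_ds => // [m_lt _|-> _]; last by rewrite modnn.
by rewrite modn_small // ifF //; apply/negbTE; rewrite -lt0n.
Qed.

Section AverageConsensus.
Variables (R : realType) (n D : nat) (adj : rel 'I_n) (v : nat -> 'cV[R]_D)
  (sigma : R) (A : nat -> 'I_n -> 'I_n -> 'M[R]_D) (gamma zeta : nat -> 'I_n -> 'I_n -> R)
  (x : nat -> 'I_n -> 'cV[R]_D).
Hypotheses (n_gt1 : (1 < n)%N) (D_gt1 : (1 < D)%N)
  (adj_sym : forall i j, adj i j = adj j i) (connected : forall i j, connect adj i j)
  (v_neq0 : forall m, (1 <= m <= D)%N -> v m != 0)
  (v_orth : forall m m', (1 <= m <= D)%N -> (1 <= m' <= D)%N -> m != m' ->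
     (v m)^T *m v m' = 0)
  (sigma_gt0 : 0 < sigma)
  (A0_sym : forall i j, adj i j -> A 0%N i j = A 0%N j i)
  (gamma_zeta : forall r i j, (1 <= r <= D.-1)%N -> adj i j ->
     [/\ gamma r i j = gamma r j i, zeta r i j = zeta r j i,
         0 < gamma r i j < (4 * (n%:R - 1) * sigma)^-1 &
         0 < zeta r i j < (4 * (n%:R - 1) * sigma)^-1])
  (A_def : forall k i j, (1 <= k)%N -> adj i j ->
     A k i j = gamma (rho D.-1 k) i j *: projvec (v (rho D.-1 k))
             + zeta (rho D.-1 k) i j *: projvec (v D))
  (x_step : forall k i,
     x k.+1 i = x k i + sigma *: \sum_(j | adj i j) (A k i j *m (x k j - x k i))).

Let ds_gt0 : (0 < D.-1)%N. Proof. by rewrite -ltnS prednK // ltnW. Qed.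

Let rho_mem k : (1 <= rho D.-1 k <= D.-1)%N. Proof. exact: rho_range. Qed.

Let index_widen m : (1 <= m <= D.-1)%N -> (1 <= m <= D)%N.
Proof. by case/andP=> -> /leq_trans; apply; exact: leq_pred. Qed.

Lemma A_sym k i j : adj i j -> A k i j = A k j i.
Proof.
case: k => [|k] ij; first exact: A0_sym.
have ji : adj j i by rewrite adj_sym.
have [gamma_sym zeta_sym _ _] := gamma_zeta (rho_mem k.+1) ij.
by rewrite !A_def // gamma_sym zeta_sym.
Qed.

Lemma avg_x k : avg (x k) = avg (x 0%N).
Proof.
elim: k => // k <-; rewrite /avg; congr (_ *: _).
under eq_bigr do rewrite x_step.
rewrite big_split /= -scaler_sumr.
under [X in _ *: X]eq_bigr do rewrite big_mkcond /=.
rewrite sum_antisym_eq0 ?scaler0 ?addr0 // => i j; rewrite adj_sym.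
case: ifP => ji; last by rewrite oppr0.
by rewrite (A_sym _ ji) -mulmxN opprB.
Qed.

(* [A k i j] combines the projections onto [v (rho k)] and [v D], so along each
   [v m] it acts as the scalar [mode_coef m k i j]. *)
Definition mode_coef m k i j : R :=
  gamma (rho D.-1 k) i j * (rho D.-1 k == m)%:R + zeta (rho D.-1 k) i j * (m == D)%:R.

Definition mode_weight m k i j : R := if adj i j then sigma * mode_coef m k i j else 0.

Definition mode m k i : R := ((v m)^T *m x k i) 0 0.

Lemma trmx_mul_A m k i j : (1 <= m <= D)%N -> (1 <= k)%N -> adj i j ->
  (v m)^T *m A k i j = mode_coef m k i j *: (v m)^T.
Proof.
move=> m_mem k1 ij.
rewrite A_def // mulmxDr -(scalemxAr (gamma _ i j)) -(scalemxAr (zeta _ i j)).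
have proj_mode r : (1 <= r <= D)%N -> (v m)^T *m projvec (v r) = (r == m)%:R *: (v m)^T.
  move=> r_mem; case: eqVneq => [->|rm]; first by rewrite trmx_mul_projvec ?v_neq0 ?scale1r.
  by rewrite trmx_mul_projvec_orth ?scale0r // v_orth // eq_sym.
rewrite proj_mode ?index_widen // proj_mode; last by rewrite leqnn andbT ltnW.
by rewrite !scalerA -scalerDl [D == m]eq_sym.
Qed.

Lemma mode_step m k i : (1 <= m <= D)%N -> (1 <= k)%N ->
  mode m k.+1 i = lap_step (mode_weight m k) (mode m k) i.
Proof.
move=> m_mem k1; rewrite /mode /lap_step x_step mulmxDr -scalemxAr mulmx_sumr.
rewrite [in LHS]mxE [X in _ + X]mxE summxE big_mkcond /= mulr_sumr.
congr (_ + _); apply: eq_bigr => j _; rewrite /mode_weight.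
case: ifP => ij; last by rewrite mulr0 mul0r.
by rewrite mulmxA trmx_mul_A // -scalemxAl mulmxBr !mxE mulrA.
Qed.

Lemma mode_weight_sym m k i j : mode_weight m k i j = mode_weight m k j i.
Proof.
rewrite /mode_weight /mode_coef adj_sym; case: ifP => // ji.
by have [-> -> _ _] := gamma_zeta (rho_mem k) ji.
Qed.

Lemma mode_weight_ge0 m k i j : 0 <= mode_weight m k i j.
Proof.
rewrite /mode_weight /mode_coef; case: ifP => // ij.
have [_ _ /andP [g0 _] /andP [z0 _]] := gamma_zeta (rho_mem k) ij.
apply: mulr_ge0; first exact: ltW.
by apply: addr_ge0; apply: mulr_ge0 => //; exact: ltW.
Qed.

Lemma mode_weight_small m k i j : n.-1%:R * mode_weight m k i j <= 1 / 2.
Proof.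
rewrite /mode_weight /mode_coef; case: ifP => ij; last by rewrite mulr0; lra.
have [_ _ /andP [g0 g_lt] /andP [z0 z_lt]] := gamma_zeta (rho_mem k) ij.
have n1 : n%:R - 1 = n.-1%:R :> R by rewrite -{1}(prednK (ltnW n_gt1)) -natr1 addrK.
have nsigma0 : 0 < 4 * n.-1%:R * sigma by rewrite !mulr_gt0 // ltr0n -ltnS prednK // ltnW.
rewrite n1 -[X in _ < X]div1r ltr_pdivlMr // in g_lt.
rewrite n1 -[X in _ < X]div1r ltr_pdivlMr // in z_lt.
by case: (_ == _); case: (_ == _); rewrite /= ?mulr1 ?mulr0 ?addr0 ?add0r; nra.
Qed.

Lemma mode_weight_persistent m : (1 <= m <= D)%N ->
  exists2 delta, 0 < delta & forall k, exists2 k', (k <= k' < k + D.-1)%N &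
    forall i j, adj i j -> delta <= mode_weight m k'.+1 i j.
Proof.
(* Mode [m < D] is active when [rho = m]; mode [D] is active at all times, in
   particular when [rho = 1]. *)
move=> m_mem; set r := if m == D then 1%N else m.
have r_mem : (1 <= r <= D.-1)%N.
  rewrite /r; case: eqVneq => [_|mD]; first by rewrite ds_gt0.
  by case/andP: m_mem => -> m_le; rewrite -ltnS (prednK (ltnW D_gt1)) ltn_neqAle mD.
have [delta delta0 delta_le] : exists2 delta, 0 < delta &
    forall i j, adj i j -> delta <= sigma * Num.min (gamma r i j) (zeta r i j).
  have [[i j] /= ij|delta delta0 delta_le] := @finite_pos_lower_bound R _
    (fun t : 'I_n * 'I_n => adj t.1 t.2)
    (fun t => sigma * Num.min (gamma r t.1 t.2) (zeta r t.1 t.2)).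
    have [_ _ /andP [g0 _] /andP [z0 _]] := gamma_zeta r_mem ij.
    by rewrite mulr_gt0 // lt_min g0 z0.
  by exists delta => // i j ij; exact: (delta_le (i, j)).
exists delta => // k.
have [t /andP [kt tk] rho_t] := rho_window k.+1 ds_gt0 r_mem.
have t0 : (0 < t)%N by apply: leq_trans kt.
exists t.-1; first lia.
move=> i j ij; apply: le_trans (delta_le _ _ ij) _.
rewrite prednK // /mode_weight /mode_coef ij rho_t ler_pM2l //.
have [_ _ /andP [g0 _] /andP [z0 _]] := gamma_zeta r_mem ij.
rewrite /r; case: eqVneq => [->|mD]; last by rewrite eqxx mulr1 mulr0 addr0 ge_min lexx.
by rewrite mulr1 ltn_eqF // mulr0 add0r ge_min lexx orbT.
Qed.

Lemma mode_cvg m i : (1 <= m <= D)%N ->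
  mode m ^~ i @ \oo --> ((v m)^T *m avg (x 0%N)) 0 0.
Proof.
move=> m_mem; have [delta delta0 persistent] := mode_weight_persistent m_mem.
have := lap_consensus connected (fun k => mode_weight_sym m k.+1)
  (fun k => mode_weight_ge0 m k.+1) (fun k => mode_weight_small m k.+1) delta0 persistent
  (fun k j => mode_step j m_mem (ltn0Sn k)) i.
by rewrite -(avg_x 1) /avg -scalemxAr mulmx_sumr mxE summxE -(cvg_shiftS (mode m ^~ i)).
Qed.

Lemma state_cvg_avg i c : (fun k => x k i c 0) @ \oo --> avg (x 0%N) c 0.
Proof.
pose w (m : 'I_D) := v m.+1.
have w_mem (m : 'I_D) : (1 <= m.+1 <= D)%N by rewrite /= ltn_ord.
have w0 m : w m != 0 by exact: v_neq0.
have w_orth m m' : m != m' -> (w m)^T *m w m' = 0 by move=> mm'; exact: v_orth.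
have entry_expansion (z : 'cV_D) :
    z c 0 = \sum_m ((w m)^T *m z) 0 0 / ((w m)^T *m w m) 0 0 * w m c 0.
  rewrite {1}(orthogonal_expansion w0 w_orth z) summxE.
  by apply: eq_bigr => m _; rewrite mxE.
rewrite entry_expansion; under eq_fun do rewrite entry_expansion.
apply: (cvg_big add_continuous) => // m _; apply: cvgMr_tmp; apply: cvgMr_tmp.
exact: mode_cvg.
Qed.

End AverageConsensus.

Unset Implicit Arguments.

Theorem mainTheorem1
  (R : realType) (n d d' : nat)
  (adj : rel 'I_n)
  (Leg HBC : {set 'I_n})
  (v : nat -> 'cV[R]_(d + d'))
  (sigma : R)
  (A : nat -> 'I_n -> 'I_n -> 'M[R]_(d + d'))
  (alpha beta : 'I_n -> 'I_n -> R)
  (gamma zeta : nat -> 'I_n -> 'I_n -> R)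
  (x : nat -> 'I_n -> 'cV[R]_(d + d')) :
  (1 < n)%N ->
  (3 <= d')%N ->
  (forall i j, adj i j = adj j i) ->
  (forall i, ~~ adj i i) ->
  (forall i j, connect adj i j) ->
  [disjoint Leg & HBC]%bool ->
  (forall m, (1 <= m <= d + d')%N -> v m != 0) ->
  (forall m m', (1 <= m <= d + d')%N -> (1 <= m' <= d + d')%N -> m != m' ->
     (v m)^T *m v m' = 0) ->
  (forall m, (1 <= m <= d + d')%N -> (2 <= nnz (v m))%N) ->
  (nnz (v 1%N) < d')%N ->
  (forall c, v (d + d')%N c 0 != 0) ->
  0 < sigma ->
  (forall k i j, ~~ adj i j -> A k i j = 0) ->
  (forall i j, adj i j -> A 0%N i j = A 0%N j i) ->
  (forall i j, adj i j ->
     (i \in Leg) && (j \in HBC) || (i \in HBC) && (j \in Leg) ->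
     [/\ 0 < alpha i j, 0 < beta i j &
         A 0%N i j = alpha i j *: projvec (v 1%N) + beta i j *: projvec (v (d + d')%N)]) ->
  (forall r i j, (1 <= r <= (d + d').-1)%N -> adj i j ->
     [/\ gamma r i j = gamma r j i, zeta r i j = zeta r j i,
         0 < gamma r i j < (4 * (n%:R - 1) * sigma)^-1 &
         0 < zeta r i j < (4 * (n%:R - 1) * sigma)^-1]) ->
  (forall k i j, (1 <= k)%N -> adj i j ->
     A k i j = gamma (rho (d + d').-1 k) i j *: projvec (v (rho (d + d').-1 k))
             + zeta (rho (d + d').-1 k) i j *: projvec (v (d + d')%N)) ->
  (forall k i, x k.+1 i =
     x k i + sigma *: \sum_(j | adj i j) (A k i j *m (x k j - x k i))) ->
  forall i (c : 'I_(d + d')),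
    (fun k => x k i c ord0) @ \oo --> (avg (x 0%N) c ord0 : R).
Proof.
(* Convergence uses only the symmetry of the initial weights: the agent classes,
   [alpha], [beta] and the sparsity of the [v m] serve privacy, not consensus. *)
move=> n_gt1 d'_ge3 adj_sym _ connected _ v_neq0 v_orth _ _ _ sigma_gt0 _ A0_sym _
  gamma_zeta A_def x_step.
have D_gt1 : (1 < d + d')%N by lia.
exact: (state_cvg_avg n_gt1 D_gt1 adj_sym connected v_neq0 v_orth sigma_gt0 A0_sym
  gamma_zeta A_def x_step).
Qed.
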